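(* Let $X$ be a Lorentzian pre-length space which has timelike curvature bounded above by $0$ globally, is uniquely geodesic and is strongly future timelike geodesically complete. Let $x\in X$, $r>0$ and $z\in I^+(x)$ with $\ell(x,z)=r$. Then $H_{x,r}(I^+(z))\subseteq I(x,z)$, where $H_{x,r}$ is the hyperbolic inversion through $x$ with radius $r$.
   Context: A Lorentzian pre-length space $(X,d,\ll,\le,\ell)$: $(X,d)$ a metric space, $\le$ reflexive and transitive, $\ll$ transitive and contained in $\le$, $\ell:X\times X\to[0,\infty]$ with $\ell(x,z)\ge\ell(x,y)+\ell(y,z)$ whenever $x\le y\le z$, and $\ell(x,y)>0$ iff $x\ll y$. $I^+(x)=\{y:x\ll y\}$, $I(x,z)=I^+(x)\cap\{y:y\ll z\}$. A maximising geodesic from $x\le y$ is a curve $\gamma:[a,b]\to X$ from $x$ to $y$ with $\gamma(s)\le\gamma(t)$ for $s\le t$ and $\ell(\gamma(s),\gamma(u))=\ell(\gamma(s),\gamma(t))+\ell(\gamma(t),\gamma(u))$ for $s\le t\le u$; uniquely geodesic means such a geodesic between any $x\ll y$ is unique. Strongly future timelike geodesically complete: every future-inextendible timelike geodesic is maximising and has infinite $\ell$-length. Hyperbolic inversion: for $p\in I^+(x)$ let $\gamma_p$ be the unique inextendible maximising geodesic from $x$ through $p$; $H_{x,r}(p)$ is the unique point $q$ on $\gamma_p$ with $\ell(x,p)\,\ell(x,q)=r^2$. Timelike curvature bounded above by $0$ globally: (i) $\ell$ is finite and continuous on $X\times X$; (ii) any $x\ll y$ are joined by a maximising geodesic; (iii)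 for every timelike triangle $\Delta(x,y,z)$ ($x\ll y\ll z$ with maximising geodesics as sides) and any points $p,q$ on its sides, $\ell(p,q)\ge\ell(\bar p,\bar q)$, where $\bar p,\bar q$ are the corresponding points (same $\ell$-distances from the endpoints of their side) on a triangle in the Minkowski plane $\mathbb R^{1,1}$ with the same side lengths. *)

From Stdlib Require Import Reals List.
From Coquelicot Require Import Rbar.
Open Scope R_scope.

Section LPLS.
Variables (X : Type) (d : X -> X -> R) (ll le : X -> X -> Prop)
          (ell : X -> X -> Rbar).

Record is_LPLS : Prop := {
  d_nonneg : forall x y, 0 <= d x y;
  d_eq0 : forall x y, d x y = 0 <-> x = y;
  d_sym : forall x y, d x y = d y x;
  d_tri : forall x y z, d x z <= d x y + d y z;
  le_refl : forall x, le x x;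
  le_trans : forall x y z, le x y -> le y z -> le x z;
  ll_trans : forall x y z, ll x y -> ll y z -> ll x z;
  ll_le : forall x y, ll x y -> le x y;
  ell_nonneg : forall x y, Rbar_le (Finite 0) (ell x y);
  ell_rev_tri : forall x y z, le x y -> le y z ->
      Rbar_le (Rbar_plus (ell x y) (ell y z)) (ell x z);
  ell_pos : forall x y, Rbar_lt (Finite 0) (ell x y) <-> ll x y
}.

Definition chrono_diamond (x z y : X) : Prop := ll x y /\ ll y z.

Definition cont_on_closed (g : R -> X) (a b : R) : Prop :=
  forall t, a <= t <= b -> forall eps, 0 < eps -> exists delta, 0 < delta /\
    forall s, a <= s <= b -> Rabs (s - t) < delta -> d (g s) (g t) < eps.

Definition cont_on_halfopen (g : R -> X) (a b : R) : Prop :=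
  forall t, a <= t < b -> forall eps, 0 < eps -> exists delta, 0 < delta /\
    forall s, a <= s < b -> Rabs (s - t) < delta -> d (g s) (g t) < eps.

Definition max_geodesic (g : R -> X) (a b : R) (x y : X) : Prop :=
  a < b /\ cont_on_closed g a b /\ g a = x /\ g b = y /\
  (forall s t, a <= s -> s <= t -> t <= b -> le (g s) (g t)) /\
  (forall s t u, a <= s -> s <= t -> t <= u -> u <= b ->
     ell (g s) (g u) = Rbar_plus (ell (g s) (g t)) (ell (g t) (g u))).

(** uniquely geodesic: maximising geodesics between x << y are unique
    (up to reparametrisation, i.e. they have the same image). *)
Definition uniquely_geodesic : Prop :=
  forall x y, ll x y ->
  forall g1 a1 b1 g2 a2 b2, max_geodesic g1 a1 b1 x y -> max_geodesic g2 a2 b2 x y ->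
  forall s, a1 <= s <= b1 -> exists t, a2 <= t <= b2 /\ g1 s = g2 t.

Definition timelike_on (g : R -> X) (a b : R) : Prop :=
  forall s t, a <= s -> s < t -> t < b -> ll (g s) (g t).

Definition causal_on (g : R -> X) (a b : R) : Prop :=
  forall s t, a <= s -> s <= t -> t < b -> le (g s) (g t).

Definition additive_on (g : R -> X) (lo hi : R -> Prop) : Prop :=
  forall s t u, lo s -> hi u -> s <= t -> t <= u ->
     ell (g s) (g u) = Rbar_plus (ell (g s) (g t)) (ell (g t) (g u)).

Definition maximising_on (g : R -> X) (a b : R) : Prop :=
  additive_on g (fun s => a <= s) (fun u => u < b).

Definition loc_maximising_on (g : R -> X) (a b : R) : Prop :=
  forall t, a <= t < b -> exists delta, 0 < delta /\
    additive_on g (fun s => a <= s /\ t - delta < s) (fun u => u < b /\ u < t + delta).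

Definition timelike_geodesic (g : R -> X) (a b : R) : Prop :=
  a < b /\ cont_on_halfopen g a b /\ timelike_on g a b /\ loc_maximising_on g a b.

Definition future_inextendible (g : R -> X) (a b : R) : Prop :=
  ~ (exists p, forall eps, 0 < eps -> exists t0, a <= t0 < b /\
        forall t, t0 < t < b -> d (g t) p < eps).

Fixpoint partition_sum (g : R -> X) (x0 : R) (l : list R) : Rbar :=
  match l with
  | nil => Finite 0
  | y :: l' => Rbar_plus (ell (g x0) (g y)) (partition_sum g y l')
  end.

Fixpoint strictly_increasing_from (x0 : R) (l : list R) : Prop :=
  match l with
  | nil => True
  | y :: l' => x0 < y /\ strictly_increasing_from y l'
  end.

(** l describes a partition s = t_0 < t_1 < ... < t_n = t of [s,t] *)
Definition partition_of (s t : R) (l : list R) : Prop :=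
  l <> nil /\ strictly_increasing_from s l /\ last l s = t.

(** the ell-length L(g) = sup_{t<b} inf_{partitions of [a,t]} sum ell is +oo *)
Definition infinite_ell_length (g : R -> X) (a b : R) : Prop :=
  forall M : R, exists t, a < t < b /\
    forall l, partition_of a t l -> Rbar_le (Finite M) (partition_sum g a l).

Definition strongly_ftl_geod_complete : Prop :=
  forall g a b, timelike_geodesic g a b -> future_inextendible g a b ->
    maximising_on g a b /\ infinite_ell_length g a b.

(** Minkowski plane R^{1,1}: points (t, x), time separation *)
Definition mtau (P Q : R * R) : R :=
  let dt := fst Q - fst P in let dx := snd Q - snd P in
  if Rle_dec (Rabs dx) dt then sqrt (dt * dt - dx * dx) else 0.

Definition on_segment (U V P : R * R) : Prop :=
  exists lam, 0 <= lam <= 1 /\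
    P = (fst U + lam * (fst V - fst U), snd U + lam * (snd V - snd U)).

Definition side_point (u v : X) (g : R -> X) (a b : R) (ub vb : R * R)
    (p : X) (pb : R * R) : Prop :=
  (exists s, a <= s <= b /\ g s = p) /\ on_segment ub vb pb /\
  Finite (mtau ub pb) = ell u p /\ Finite (mtau pb vb) = ell p v.

Definition tl_curv_bounded_above_0 : Prop :=
  (forall x y, is_finite (ell x y)) /\
  (forall x y eps, 0 < eps -> exists delta, 0 < delta /\
     forall x' y', d x x' < delta -> d y y' < delta ->
       Rabs (real (ell x' y') - real (ell x y)) < eps) /\
  (forall x y, ll x y -> exists g a b, max_geodesic g a b x y) /\
  (forall x y z g1 a1 b1 g2 a2 b2 g3 a3 b3, ll x y -> ll y z ->
     max_geodesic g1 a1 b1 x y -> max_geodesic g2 a2 b2 y z ->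
     max_geodesic g3 a3 b3 x z ->
     forall xb yb zb : R * R,
       Finite (mtau xb yb) = ell x y -> Finite (mtau yb zb) = ell y z ->
       Finite (mtau xb zb) = ell x z ->
     forall p pb q qb,
       (side_point x y g1 a1 b1 xb yb p pb \/ side_point y z g2 a2 b2 yb zb p pb \/
        side_point x z g3 a3 b3 xb zb p pb) ->
       (side_point x y g1 a1 b1 xb yb q qb \/ side_point y z g2 a2 b2 yb zb q qb \/
        side_point x z g3 a3 b3 xb zb q qb) ->
       Rbar_le (Finite (mtau pb qb)) (ell p q)).

(** q = H_{x,r}(p): q is the point on the (unique) future-inextendible
    maximising geodesic g from x through p with ell(x,p) ell(x,q) = r^2 *)
Definition hyperbolic_inversion (x : X) (r : R) (p q : X) : Prop :=
  ll x p /\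
  exists g a b,
    a < b /\ g a = x /\ cont_on_halfopen g a b /\ causal_on g a b /\
    maximising_on g a b /\ future_inextendible g a b /\
    (exists s, a <= s < b /\ g s = p) /\
    (exists s, a <= s < b /\ g s = q) /\
    Rbar_mult (ell x p) (ell x q) = Finite (r ^ 2).

End LPLS.

(* Place the timelike triangle x << z << p and its Minkowski comparison triangle
   with x̄ = (0,0), p̄ = (L,0), L = ℓ(x,p).  Since ℓ(x,p) ≥ ℓ(x,z) + ℓ(z,p) > r,
   the inverse point q lies on the geodesic from x to p with ℓ(x,q) = r²/L > 0,
   so q̄ = (r²/L, 0).  A direct computation in the plane gives
   τ(q̄, z̄) = r·ℓ(z,p)/L > 0, and the curvature bound ℓ(q,z) ≥ τ(q̄, z̄) puts q
   in I⁻(z). *)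
From Stdlib Require Import Reals Lra Psatz.
From Coquelicot Require Import Rbar.
Open Scope R_scope.

Lemma mtau_eq (P Q : R * R) (k : R) :
  0 <= k -> Rabs (snd Q - snd P) <= fst Q - fst P ->
  (fst Q - fst P) * (fst Q - fst P) - (snd Q - snd P) * (snd Q - snd P) = k * k ->
  mtau P Q = k.
Proof.
  intros Hk Hcausal Hsq. unfold mtau; cbv zeta.
  destruct (Rle_dec _ _); [|contradiction].
  rewrite Hsq. now apply sqrt_square.
Qed.

Lemma mtau_refl (P : R * R) : mtau P P = 0.
Proof.
  apply mtau_eq; [lra | | ring].
  replace (snd P - snd P) with 0 by ring. rewrite Rabs_R0. lra.
Qed.

Lemma mtau_axis (a b : R) : a <= b -> mtau (a, 0) (b, 0) = b - a.
Proof.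
  intro Hab. apply mtau_eq; simpl; [lra | | ring].
  replace (0 - 0) with 0 by ring. rewrite Rabs_R0. lra.
Qed.

(* The apex z̄ of the comparison triangle with sides r = ℓ(x,z), c = ℓ(z,p)
   and L = ℓ(x,p): the point at time separation r from (0,0) and c from (L,0). *)
Definition comparison_apex (r c L : R) : R * R :=
  let t := (L * L + r * r - c * c) / (2 * L) in (t, sqrt (t * t - r * r)).

Section ComparisonTriangle.
Variables r c L : R.
Hypotheses (r_pos : 0 < r) (c_pos : 0 < c) (rev_tri : r + c <= L).

Lemma comparison_apex_coords :
  exists t y, comparison_apex r c L = (t, y) /\
    2 * L * t = L * L + r * r - c * c /\ r <= t /\ 0 <= y /\ y * y = t * t - r * r.
Proof.
  set (t := (L * L + r * r - c * c) / (2 * L)).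
  assert (t_eq : 2 * L * t = L * L + r * r - c * c) by (unfold t; field; lra).
  exists t, (sqrt (t * t - r * r)). split; [reflexivity|].
  clearbody t.
  split; [exact t_eq|].
  assert (t_ge_r : r <= t).
  { assert (2 * L * (t - r) = (L - r) * (L - r) - c * c) by nra.
    assert (c * c <= (L - r) * (L - r)) by nra.
    nra. }
  split; [exact t_ge_r|]. split; [apply sqrt_pos|].
  apply sqrt_sqrt. nra.
Qed.

Lemma comparison_apex_source : mtau (0, 0) (comparison_apex r c L) = r.
Proof.
  destruct comparison_apex_coords as [t [y [-> [t_eq [t_ge_r [y_nonneg y_sq]]]]]].
  apply mtau_eq; simpl; [lra | |].
  - rewrite Rminus_0_r, Rabs_right by lra. nra.
  - nra.
Qed.

Lemma comparison_apex_target : mtau (comparison_apex r c L) (L, 0) = c.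
Proof.
  destruct comparison_apex_coords as [t [y [-> [t_eq [t_ge_r [y_nonneg y_sq]]]]]].
  assert (target_gap : (L - t) * (L - t) - y * y = c * c) by nra.
  assert (t_le_L : t <= L) by nra.
  apply mtau_eq; simpl; [lra | |].
  - rewrite Rabs_left1 by lra. nra.
  - nra.
Qed.

Lemma comparison_apex_inverse_point :
  mtau (r * r / L, 0) (comparison_apex r c L) = r * c / L.
Proof.
  destruct comparison_apex_coords as [t [y [-> [t_eq [t_ge_r [y_nonneg y_sq]]]]]].
  set (m := r * r / L).
  assert (m_eq : m * L = r * r) by (unfold m; field; lra).
  clearbody m.
  (* with mL = r² and 2Lt = L² + r² - c² one gets (t - m)² - y² = (rc/L)² *)
  assert (gap : L * L * ((t - m) * (t - m) - y * y) = r * r * c * c) by nra.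
  assert (t_minus_m : 2 * L * (t - m) = L * L - r * r - c * c) by nra.
  assert (rcL_pos : 0 < r * c / L) by (apply Rdiv_lt_0_compat; nra).
  apply mtau_eq; simpl; [lra | |].
  - rewrite Rminus_0_r, Rabs_right by lra.
    assert (0 < (t - m) * (t - m) - y * y).
    { apply (Rmult_lt_reg_l (L * L)); [nra|].
      rewrite Rmult_0_r, gap. repeat apply Rmult_lt_0_compat; lra. }
    assert (0 < t - m) by nra.
    nra.
  - rewrite Rminus_0_r.
    apply (Rmult_eq_reg_l (L * L)); [| nra].
    rewrite gap. field. lra.
Qed.

End ComparisonTriangle.

Section FiniteTimeSeparation.
Variables (X : Type) (d : X -> X -> R) (ll le : X -> X -> Prop)
          (ell : X -> X -> Rbar).
Hypothesis HL : is_LPLS X d ll le ell.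
Hypothesis ell_finite : forall x y, is_finite (ell x y).

Lemma ell_Finite (x y : X) : ell x y = Finite (real (ell x y)).
Proof. symmetry. apply ell_finite. Qed.

Lemma real_ell_nonneg (x y : X) : 0 <= real (ell x y).
Proof. pose proof (ell_nonneg _ _ _ _ _ HL x y) as H. now rewrite ell_Finite in H. Qed.

Lemma real_ell_pos (x y : X) : ll x y <-> 0 < real (ell x y).
Proof. rewrite <- (ell_pos _ _ _ _ _ HL), ell_Finite. reflexivity. Qed.

Lemma real_ell_rev_tri (x y z : X) :
  le x y -> le y z -> real (ell x y) + real (ell y z) <= real (ell x z).
Proof.
  intros Hxy Hyz. pose proof (ell_rev_tri _ _ _ _ _ HL x y z Hxy Hyz) as H.
  now rewrite (ell_Finite x y), (ell_Finite y z), (ell_Finite x z) in H.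
Qed.

Lemma real_ell_refl (x : X) : real (ell x x) = 0.
Proof.
  pose proof (real_ell_rev_tri x x x (le_refl _ _ _ _ _ HL x) (le_refl _ _ _ _ _ HL x)).
  pose proof (real_ell_nonneg x x). lra.
Qed.

Lemma max_geodesic_restrict (g : R -> X) (a b s : R) :
  a < s < b -> cont_on_halfopen X d g a b -> causal_on X le g a b ->
  maximising_on X ell g a b -> max_geodesic X d le ell g a s (g a) (g s).
Proof.
  intros Hs Hcont Hcaus Hmax.
  split; [lra|]. split; [|split; [reflexivity | split; [reflexivity | split]]].
  - intros t Ht eps Heps. destruct (Hcont t ltac:(lra) eps Heps) as [del [Hdel Hd]].
    exists del. split; [exact Hdel|]. intros u Hu. apply Hd. lra.
  - intros u v Hau Huv Hvs. apply Hcaus; lra.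
  - intros u v w Hau Huv Hvw Hws. apply Hmax; lra.
Qed.

Lemma hyperbolic_inversion_on_geodesic (x p q : X) (r : R) :
  0 <= r < real (ell x p) -> hyperbolic_inversion X d ll le ell x r p q ->
  exists g a b, max_geodesic X d le ell g a b x p /\
    (exists s, a <= s <= b /\ g s = q) /\
    real (ell x p) * real (ell x q) = r * r /\
    real (ell x q) + real (ell q p) = real (ell x p).
Proof.
  intros Hr [Hxp [g [a [b [Hab [Hga [Hcont [Hcaus [Hmax [_
                [[s [Hs Hgs]] [[s' [Hs' Hgs']] Hmul]]]]]]]]]]]].
  rewrite (ell_Finite x p), (ell_Finite x q) in Hmul. simpl in Hmul. injection Hmul as Hmul.
  rewrite Rmult_1_r in Hmul.
  assert (Ha_s : a < s).
  { destruct (Rle_lt_dec s a) as [Hsa|]; [|assumption].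
    replace s with a in Hgs by lra. subst x p. rewrite real_ell_refl in Hr. lra. }
  assert (Hsplit : forall u v, a <= u -> u <= v -> v < b ->
            real (ell (g a) (g v)) = real (ell (g a) (g u)) + real (ell (g u) (g v))).
  { intros u v Hau Huv Hvb. pose proof (Hmax a u v (Rle_refl a) Hvb Hau Huv) as H.
    rewrite (ell_Finite (g a) (g v)), (ell_Finite (g a) (g u)), (ell_Finite (g u) (g v)) in H.
    now injection H. }
  (* q cannot lie beyond p: then ℓ(x,q) ≥ ℓ(x,p) > r, contradicting ℓ(x,p) ℓ(x,q) = r² *)
  assert (Hs's : s' <= s).
  { destruct (Rle_lt_dec s' s) as [|Hss']; [assumption|].
    pose proof (Hsplit s s' (proj1 Hs) (Rlt_le _ _ Hss') (proj2 Hs')) as H.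
    rewrite Hga, Hgs, Hgs' in H. pose proof (real_ell_nonneg p q). nra. }
  exists g, a, s. split; [|split; [|split; [exact Hmul|]]].
  - rewrite <- Hga, <- Hgs. apply max_geodesic_restrict with b; [lra | assumption..].
  - exists s'. split; [lra | exact Hgs'].
  - pose proof (Hsplit s' s (proj1 Hs') Hs's (proj2 Hs)) as H.
    rewrite Hga, Hgs, Hgs' in H. lra.
Qed.

Lemma side_point_source (g : R -> X) (a b : R) (u v : X) (ub vb : R * R) :
  max_geodesic X d le ell g a b u v -> Finite (mtau ub vb) = ell u v ->
  side_point X ell u v g a b ub vb u ub.
Proof.
  intros [Hab [_ [Hga _]]] Huv.
  split; [exists a; split; [lra | exact Hga]|]. split; [|split; [|exact Huv]].
  - exists 0. split; [lra|]. destruct ub. simpl. f_equal; ring.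
  - now rewrite mtau_refl, ell_Finite, real_ell_refl.
Qed.

Lemma side_point_on_axis (g : R -> X) (a b : R) (u v w : X) (L m : R) :
  0 < L -> 0 <= m <= L -> (exists s, a <= s <= b /\ g s = w) ->
  real (ell u w) = m -> real (ell w v) = L - m ->
  side_point X ell u v g a b (0, 0) (L, 0) w (m, 0).
Proof.
  intros HL0 Hm Hw Huw Hwv.
  split; [exact Hw|]. split; [|split].
  - exists (m / L). split.
    + split; [apply Rmult_le_pos; [lra | left; now apply Rinv_0_lt_compat]|].
      apply Rmult_le_reg_r with L; [lra|]. field_simplify; lra.
    + simpl. f_equal; field; lra.
  - rewrite mtau_axis, ell_Finite, Huw by lra. f_equal. ring.
  - rewrite mtau_axis, ell_Finite, Hwv by lra. reflexivity.
Qed.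

Lemma real_ell_inverse_point_lower_bound (x z p q : X) (g : R -> X) (a b : R) :
  tl_curv_bounded_above_0 X d ll le ell -> ll x z -> ll z p ->
  max_geodesic X d le ell g a b x p -> (exists s, a <= s <= b /\ g s = q) ->
  let r := real (ell x z) in let c := real (ell z p) in let L := real (ell x p) in
  real (ell x q) = r * r / L -> real (ell q p) = L - r * r / L ->
  r * c / L <= real (ell q z).
Proof.
  intros [_ [_ [Hgeo Hcmp]]] Hxz Hzp Hg Hq r c L Hxq Hqp.
  assert (Hr : 0 < r) by now apply real_ell_pos.
  assert (Hc : 0 < c) by now apply real_ell_pos.
  assert (HrcL : r + c <= L)
    by (apply real_ell_rev_tri; now apply (ll_le _ _ _ _ _ HL)).
  assert (Hm : 0 <= r * r / L <= L).
  { split; [left; apply Rdiv_lt_0_compat; nra|].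
    apply Rmult_le_reg_r with L; [lra|]. field_simplify; nra. }
  destruct (Hgeo x z Hxz) as [g1 [a1 [b1 Hg1]]].
  destruct (Hgeo z p Hzp) as [g2 [a2 [b2 Hg2]]].
  set (zb := comparison_apex r c L).
  assert (Exz : Finite (mtau (0, 0) zb) = ell x z)
    by (unfold zb; rewrite comparison_apex_source by lra; apply ell_finite).
  assert (Ezp : Finite (mtau zb (L, 0)) = ell z p)
    by (unfold zb; rewrite comparison_apex_target by lra; apply ell_finite).
  assert (Exp : Finite (mtau (0, 0) (L, 0)) = ell x p)
    by (rewrite mtau_axis, Rminus_0_r by lra; apply ell_finite).
  assert (Sq : side_point X ell x p g a b (0, 0) (L, 0) q (r * r / L, 0))
    by (apply side_point_on_axis; [lra | lra | assumption..]).
  assert (Sz : side_point X ell z p g2 a2 b2 zb (L, 0) z zb)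
    by (eapply side_point_source; eassumption).
  pose proof (Hcmp x z p g1 a1 b1 g2 a2 b2 g a b Hxz Hzp Hg1 Hg2 Hg
    (0, 0) zb (L, 0) Exz Ezp Exp q (r * r / L, 0) z zb
    (or_intror (or_intror Sq)) (or_intror (or_introl Sz))) as Hqz.
  unfold zb in Hqz. rewrite comparison_apex_inverse_point, (ell_Finite q z) in Hqz by lra.
  exact Hqz.
Qed.

End FiniteTimeSeparation.

Theorem proposition3p8 (X : Type) (d : X -> X -> R) (ll le : X -> X -> Prop)
    (ell : X -> X -> Rbar) :
  is_LPLS X d ll le ell ->
  tl_curv_bounded_above_0 X d ll le ell ->
  uniquely_geodesic X d ll le ell ->
  strongly_ftl_geod_complete X d ll ell ->
  forall (x : X) (r : R) (z : X),
    0 < r -> ll x z -> ell x z = Finite r ->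
  forall p, ll z p ->
  forall q, hyperbolic_inversion X d ll le ell x r p q ->
    chrono_diamond X ll x z q.
Proof.
  intros HL Hcurv _ _ x r z Hr Hxz Hxzr p Hzp q Hinv.
  pose proof (proj1 Hcurv) as Hfin.
  pose proof (@real_ell_pos X d ll le ell HL Hfin) as Hpos.
  assert (Hr_eq : real (ell x z) = r) by now rewrite Hxzr.
  set (L := real (ell x p)). set (c := real (ell z p)).
  assert (Hc : 0 < c) by now apply Hpos.
  assert (HrcL : r + c <= L).
  { rewrite <- Hr_eq. apply (@real_ell_rev_tri X d ll le ell HL Hfin);
      now apply (ll_le _ _ _ _ _ HL). }
  destruct (@hyperbolic_inversion_on_geodesic X d ll le ell HL Hfin x p q r
              ltac:(fold L; lra) Hinv) as [g [a [b [Hg [Hq [HLq Hqp]]]]]].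
  fold L in HLq, Hqp.
  assert (Hxq : real (ell x q) = r * r / L) by (field_simplify_eq; lra).
  pose proof (@real_ell_inverse_point_lower_bound X d ll le ell HL Hfin
                x z p q g a b Hcurv Hxz Hzp Hg Hq) as Hqz.
  cbv zeta in Hqz. rewrite Hr_eq in Hqz. fold L c in Hqz.
  split; apply Hpos.
  - rewrite Hxq. apply Rdiv_lt_0_compat; nra.
  - enough (0 < r * c / L) by (specialize (Hqz Hxq ltac:(lra)); lra).
    apply Rdiv_lt_0_compat; nra.
Qed.
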